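(* Let $G$ be a connected graph, let $(u,v)\in V_p$, and let $R\subseteq V(G)$ be any resolving set for $G$. (1) If $r_w(u,v)=0$ for all $w\in V(G)\setminus\{u,v\}$, then $u\in R$ or $v\in R$. (2) If $r_w(u,v)=\frac12$ for some $w\in V(G)$, then $u\in R$ or $v\in R$.
   Context: Graphs are finite, simple and connected; $d(u,v)$ denotes the shortest-path distance. $V_p$ denotes the set of all unordered pairs $(u,v)$ of distinct vertices. A vertex $x$ resolves the pair $(u,v)$ if $d(x,u)\neq d(x,v)$. A set $R\subseteq V(G)$ is a resolving set for $G$ if every pair of distinct vertices of $G$ is resolved by some element of $R$. For $(u,v)\in V_p$, $R(u,v)$ is the set of all vertices resolving $(u,v)$. The resolving share of a vertex $w$ for $(u,v)$ is $r_w(u,v)=\frac{1}{|R(u,v)|}$ if $w$ resolves $u$ and $v$, and $r_w(u,v)=0$ otherwise. *)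

From mathcomp Require Import all_boot all_order all_algebra.
Set Implicit Arguments. Unset Strict Implicit. Unset Printing Implicit Defensive.
Import GRing.Theory Num.Theory.

Definition simple_graph (T : finType) (e : rel T) : Prop :=
  symmetric e /\ irreflexive e.

Fixpoint reach (T : finType) (e : rel T) (n : nat) (x y : T) : bool :=
  match n with
  | 0 => x == y
  | n'.+1 => reach e n' x y || [exists z, reach e n' x z && e z y]
  end.

Definition connected_graph (T : finType) (e : rel T) : Prop :=
  forall x y : T, exists n, reach e n x y.

(* Shortest-path distance: the least n such that y is reachable from x
   within n steps (a shortest path has at most #|T| - 1 edges, so searching
   n in 0 .. #|T|-1 suffices in a connected graph). *)
Definition dist (T : finType) (e : rel T) (x y : T) : nat :=
  find (fun n => reach e n x y) (iota 0 #|T|).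

Definition resolves (T : finType) (e : rel T) (x u v : T) : bool :=
  dist e x u != dist e x v.

Definition resolving_set (T : finType) (e : rel T) (R : {set T}) : Prop :=
  forall u v : T, u != v -> exists2 x, x \in R & resolves e x u v.

Definition resolvers (T : finType) (e : rel T) (u v : T) : {set T} :=
  [set x | resolves e x u v].

Definition rshare (T : finType) (e : rel T) (w u v : T) : rat :=
  if resolves e w u v then ((#|resolvers e u v|%:R)^-1)%R else 0%R.

From mathcomp Require Import all_boot all_order all_algebra.
Set Implicit Arguments. Unset Strict Implicit. Unset Printing Implicit Defensive.
Import GRing.Theory Num.Theory.
Local Open Scope ring_scope.

(* Both u and v resolve (u,v), being at distance 0 from themselves only.  A
   resolving set must contain some resolver of (u,v); each hypothesis forces
   every resolver to be u or v: in (1) any other resolver would get a positive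
   share, in (2) a share of 1/2 means there are exactly two resolvers. *)

Section Resolvers.

Variables (T : finType) (e : rel T).

Lemma dist_eq0 (x y : T) : (dist e x y == 0%N) = (x == y).
Proof.
rewrite /dist; have : (0 < #|T|)%N by apply/card_gt0P; exists x.
by case: #|T| => [|n] //= _; case: (x == y).
Qed.

Lemma dist_self (x : T) : dist e x x = 0%N.
Proof. by apply/eqP; rewrite dist_eq0. Qed.

Lemma resolves_left (u v : T) : u != v -> resolves e u u v.
Proof. by move=> uv; rewrite /resolves dist_self eq_sym dist_eq0. Qed.

Lemma resolves_right (u v : T) : u != v -> resolves e v u v.
Proof. by move=> uv; rewrite /resolves dist_self dist_eq0 eq_sym. Qed.

Lemma resolvers_endpoints (u v : T) : u != v -> [set u; v] \subset resolvers e u v.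
Proof.
move=> uv; apply/subsetP=> y; rewrite !inE.
by case/orP=> /eqP->; [exact: resolves_left | exact: resolves_right].
Qed.

Lemma rshare_eq0 (w u v : T) : (rshare e w u v == 0) = ~~ resolves e w u v.
Proof.
rewrite /rshare; case: ifP => [res|_]; last by rewrite eqxx.
rewrite invr_eq0 pnatr_eq0 cards_eq0; apply/set0Pn; exists w; by rewrite inE.
Qed.

Lemma card_resolvers_rshare_half (w u v : T) :
  rshare e w u v = 1 / 2 -> #|resolvers e u v| = 2%N.
Proof.
rewrite /rshare mul1r; case: ifP => _ => [/(congr1 GRing.inv)|/esym/eqP].
- by rewrite !invrK => /eqP; rewrite (eqr_nat rat _ 2) => /eqP.
- by rewrite invr_eq0 pnatr_eq0.
Qed.

Lemma resolvers_card2 (u v : T) :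
  u != v -> #|resolvers e u v| = 2%N -> resolvers e u v = [set u; v].
Proof.
move=> uv card2; apply/eqP; rewrite eq_sym eqEcard resolvers_endpoints //=.
by rewrite card2 cards2 uv.
Qed.

Lemma resolving_set_endpoint (R : {set T}) (u v : T) :
  resolving_set e R -> u != v -> {subset resolvers e u v <= [set u; v]} ->
  u \in R \/ v \in R.
Proof.
move=> resR uv sub; have [x xR xres] := resR u v uv.
have : x \in [set u; v] by apply: sub; rewrite inE.
by rewrite !inE => /orP[] /eqP xE; rewrite -xE; [left | right].
Qed.

End Resolvers.

Theorem lemma2p9 (T : finType) (e : rel T) (u v : T) (R : {set T}) :
  simple_graph e -> connected_graph e -> u != v -> resolving_set e R ->
  ((forall w : T, w != u -> w != v -> rshare e w u v = 0) ->
     u \in R \/ v \in R) /\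
  ((exists w : T, rshare e w u v = 1 / 2) -> u \in R \/ v \in R).
Proof.
move=> _ _ uv resR; split.
- move=> share0; apply: (resolving_set_endpoint resR uv) => w.
  rewrite !inE; apply: contraLR; rewrite negb_or => /andP[wu wv].
  by rewrite -rshare_eq0 share0.
- case=> w /card_resolvers_rshare_half card2.
  by apply: (resolving_set_endpoint resR uv) => y; rewrite resolvers_card2.
Qed.
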